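(* Let $X$ be a locally compact, Hausdorff, second countable space and $(Y,d)$ a complete metric space. A net $(f_\lambda)$ in $C_{od}(X,Y)$ is $\gamma$-Cauchy if and only if $(f_\lambda)$ converges in $\tau_{\iota,D}$ to some $f\in C_{od}(X,Y)$.
   Context: $C_{od}(X,Y)$ is the set of continuous functions $f:\mathrm{dom}(f)\to Y$ whose domain is an open subset of $X$ (including the empty function). $CL(X)$ is the set of closed subsets of $X$ (including $\emptyset$) with the Fell topology, generated by $(X\setminus K)^+=\{A: A\subseteq X\setminus K\}$ ($K$ compact) and $V^-=\{A: A\cap V\neq\emptyset\}$ ($V$ nonempty open). Let $D(f)=X\setminus\mathrm{dom}(f)$. The topology $\tau_{\iota,D}$ on $C_{od}(X,Y)$ is generated by the sets $\langle K,V\rangle=\{f: K\subseteq\mathrm{dom}(f),\ f(K)\subseteq V\}$ ($K\subseteq X$ compact, $V\subseteq Y$ open) and $D^{-1}(W)$ ($W$ Fell-open). A net $(f_\lambda)$ in $C_{od}(X,Y)$ is called $\gamma$-Cauchy if $(D(f_\lambda))$ converges in the Fell topology to some $A\in CL(X)$ and, in case $A\neq X$, for every nonempty compact $K\subseteq X\setminus A$ there exists $\lambda_K$ such that $K\subseteq\mathrm{dom}(f_\lambda)$ for all $\lambda>\lambda_K$ and the net $(f_\lambda|_K)_{\lambda>\lambda_K}$ is uniformly Cauchy. *)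

From HB Require Import structures.
From mathcomp Require Import all_boot all_order all_algebra.
From mathcomp Require Import all_classical all_reals.
From mathcomp Require Import topology normedtype.
From mathcomp Require Import metric_structure.

Set Implicit Arguments.
Unset Strict Implicit.
Unset Printing Implicit Defensive.

Import Order.TTheory GRing.Theory Num.Theory.
Local Open Scope classical_set_scope.
Local Open Scope ring_scope.

Inductive gen_open (T : Type) (S : set (set T)) : set T -> Prop :=
  | gen_open_sub U : S U -> gen_open S U
  | gen_open_setT : gen_open S setT
  | gen_open_setI U V : gen_open S U -> gen_open S V -> gen_open S (U `&` V)
  | gen_open_bigcup (J : Type) (F : J -> set T) :
      (forall j, gen_open S (F j)) -> gen_open S (\bigcup_j F j).

Definition directed (I : Type) (le : I -> I -> Prop) : Prop :=
  [/\ (exists i : I, True),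
      (forall i, le i i),
      (forall i j k, le i j -> le j k -> le i k) &
      (forall i j, exists k, le i k /\ le j k)].

Definition net_conv (I : Type) (le : I -> I -> Prop) (T : Type)
    (S : set (set T)) (x : I -> T) (l : T) : Prop :=
  forall U, gen_open S U -> U l -> exists i0, forall i, le i0 i -> U (x i).

Definition complete_metric (R : realType) (Y : metricType R) : Prop :=
  forall u : nat -> Y,
    (forall e : R, 0 < e -> exists N : nat, forall m n : nat,
        (N <= m)%N -> (N <= n)%N -> mdist (u m) (u n) < e) ->
    exists l : Y, u @ \oo --> l.

(** A function is represented by its domain
    and a total map whose restriction to the domain is continuous; values
    outside the domain are irrelevant to everything below. *)
Record Cod (X Y : topologicalType) := MkCod {
  cdom : set X;
  cdom_open : open cdom;
  cfun : X -> Y;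
  cfun_cont : {within cdom, continuous cfun} }.

Definition Dc (X Y : topologicalType) (f : Cod X Y) : set X := ~` cdom f.

Definition fell_subbase (X : topologicalType) : set (set (set X)) :=
  [set W | (exists K : set X, compact K /\ W = [set A | A `<=` ~` K]) \/
           (exists V : set X, [/\ open V, V !=set0 &
                               W = [set A | A `&` V !=set0]])].

Definition fell_open (X : topologicalType) := gen_open (@fell_subbase X).

Definition tauD_subbase (X Y : topologicalType) : set (set (Cod X Y)) :=
  [set U | (exists (K : set X) (V : set Y), [/\ compact K, open V &
              U = [set f | K `<=` cdom f /\ cfun f @` K `<=` V]]) \/
           (exists W : set (set X), fell_open W /\ U = [set f | W (Dc f)])].

Definition gamma_cauchy (R : realType) (X : topologicalType) (Y : metricType R)
    (I : Type) (le : I -> I -> Prop) (F : I -> Cod X Y) : Prop :=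
  exists A : set X,
    [/\ closed A,
        net_conv le (@fell_subbase X) (fun i => Dc (F i)) A &
        A <> setT ->
        forall K : set X, compact K -> K !=set0 -> K `<=` ~` A ->
        exists iK : I,
          (forall i, le iK i -> K `<=` cdom (F i)) /\
          (forall e : R, 0 < e -> exists i0 : I, le iK i0 /\
             forall i j, le iK i -> le iK j -> le i0 i -> le i0 j ->
             forall x, K x -> mdist (cfun (F i) x) (cfun (F j) x) < e)].

(* If f_λ -> f in τ_{ι,D}, then D(f_λ) -> D(f) in the Fell topology, and for a
   compact K ⊆ dom f the subbasic sets <L, V>, with L the compact part of K on
   which f stays within e/4 of f(x) and V the e/2-ball about f(x), force
   uniform convergence on K; so the net is γ-Cauchy with A = D(f).
   Conversely, if the net is γ-Cauchy with Fell limit A, completeness of Y gives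
   a pointwise limit g on X \ A, and the Cauchy condition makes the convergence
   uniform on compact subsets of X \ A.  Every point of the open set X \ A has a
   compact neighbourhood inside it (X is locally compact Hausdorff), so g is
   continuous there.  Uniform convergence on a compact K to a limit that is
   continuous on K puts f_λ(K) eventually inside every open V ⊇ g(K), and Fell
   convergence takes care of the sets D^{-1}(W). *)

From HB Require Import structures.
From mathcomp Require Import all_boot all_order all_algebra.
From mathcomp Require Import all_classical all_reals.
From mathcomp Require Import topology normedtype.
From mathcomp Require Import metric_structure.
From mathcomp Require Import interval_inference lra.

Set Implicit Arguments.
Unset Strict Implicit.
Unset Printing Implicit Defensive.

Import Order.TTheory GRing.Theory Num.Theory.
Import metricType_numDomainType.
Local Open Scope classical_set_scope.
Local Open Scope ring_scope.

Definition tail_filter (I : Type) (le : I -> I -> Prop) : set_system I :=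
  [set P | exists i0, forall i, le i0 i -> P i].

Lemma tail_filter_proper (I : Type) (le : I -> I -> Prop) :
  directed le -> ProperFilter (tail_filter le).
Proof.
case=> [[i0 _] le_refl le_tr le_dir].
apply: Build_ProperFilter_ex => [P [i PP]|]; first by exists i; exact/PP/le_refl.
split=> [|P Q [i Pi] [j Qj]|P Q PQ [i Pi]]; first by exists i0.
- have [k [ik jk]] := le_dir i j; exists k => l kl.
  by split; [apply: Pi; exact: le_tr ik kl | apply: Qj; exact: le_tr jk kl].
- by exists i => l /Pi /PQ.
Qed.

Lemma gen_open_near (T J : Type) (S : set (set T)) (G : set_system J)
    (x : J -> T) (l : T) : Filter G ->
  (forall U, S U -> U l -> \forall j \near G, U (x j)) ->
  forall U, gen_open S U -> U l -> \forall j \near G, U (x j).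
Proof.
move=> FG xS U; elim=> {U} [U /xS //|_|U V _ xU _ xV [Ul Vl]|J' U _ xU [j _ Ujl]].
- exact: filterT.
- by apply: filterI; [exact: xU | exact: xV].
- by apply: filterS (xU j Ujl) => i Uxi; exists j.
Qed.

Lemma net_conv_subbase (I : Type) (le : I -> I -> Prop) (T : Type)
    (S : set (set T)) (x : I -> T) (l : T) : directed le ->
  (forall U, S U -> U l -> \forall i \near tail_filter le, U (x i)) ->
  net_conv le S x l.
Proof. by move=> /tail_filter_proper TF; exact: gen_open_near. Qed.

Lemma locally_compact_nbhs_compact (X : topologicalType) :
    locally_compact [set: X] -> hausdorff_space X ->
  forall (x : X) (O : set X), nbhs x O ->
  exists K, [/\ compact K, nbhs x K & K `<=` O].
Proof.
move=> lcX hX x O Ox; have [C + [cC _]] := lcX x Logic.I; rewrite withinET => Cx.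
have [W Wx WCO] := compact_regular hX cC Cx (filterI Cx Ox).
exists (closure W); split.
- by apply: subclosed_compact (@closed_closure _ W) cC _ => z /WCO[].
- exact: filterS (@subset_closure _ W) Wx.
- by move=> z /WCO[].
Qed.

Section metric_valued_nets.
Context {R : realType} {Y : metricType R}.

Lemma mdist_lt_trans (a b c : Y) (r s : R) :
  mdist a b < r -> mdist b c < s -> mdist a c < r + s.
Proof. by move=> ab bc; apply: le_lt_trans (metric_triangle a b c) _; exact: ltrD. Qed.

Lemma open_mdist_lt (y : Y) (r : R) : open [set z | mdist y z < r].
Proof.
rewrite openE => z yz; apply/nbhs_mdistP; exists (r - mdist y z) => /=.
  by rewrite subr_gt0.
by move=> w /= zw; apply: le_lt_trans (metric_triangle y z w) _; rewrite -ltrBrDl.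
Qed.

Lemma continuous_at_mdist_lt (T : topologicalType) (f : T -> Y) (x : T) (e : R) :
  {for x, continuous f} -> 0 < e -> \forall z \near x, mdist (f x) (f z) < e.
Proof. by move=> fx; exact: cvgr_dist_lt. Qed.

Lemma compact_setI_mdist_le (T : topologicalType) (K : set T) (h : T -> Y)
    (c : Y) (r : R) :
  compact K -> (forall x, K x -> {for x, continuous h}) ->
  compact (K `&` [set z | mdist c (h z) <= r]).
Proof.
move=> cK hK G PG GKr; have [p [Kp clp]] := cK G PG (filterS (@subIsetl _ _ _) GKr).
exists p; split => //; split => //=; rewrite leNgt; apply/negP => rp.
have gap : 0 < mdist c (h p) - r by rewrite subr_gt0.
have [z [[_ /= zr] /= pz]] := clp _ _ GKr (continuous_at_mdist_lt (hK p Kp) gap).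
have := metric_triangle c (h z) (h p); rewrite (metric_sym (h z)); lra.
Qed.

Lemma complete_cauchy_cvg (J : Type) (G : set_system J) (u : J -> Y) :
  complete_metric Y -> ProperFilter G ->
  (forall e : R, 0 < e ->
     exists2 P, G P & forall i j, P i -> P j -> mdist (u i) (u j) < e) ->
  exists l : Y, u @ G --> l.
Proof.
(* Points picked in P_0 ∩ ... ∩ P_n, where diam u(P_n) < 1/(n+1), form a Cauchy
   sequence; its limit is the limit along G. *)
move=> hY PG cauchy.
have /choice[P /all_and2[GP smallP]] : forall n : nat, exists P, G P /\
    forall i j, P i -> P j -> mdist (u i) (u j) < n.+1%:R^-1.
  move=> n; have [|P GP Pn] := cauchy n.+1%:R^-1; last by exists P.
  by rewrite invr_gt0 ltr0n.
have near_all n : \forall i \near G, forall k, (k <= n)%N -> P k i.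
  elim: n => [|n IH]; first by apply: filterS (GP 0%N) => i Pi [].
  apply: filterS (filterI IH (GP n.+1)) => i [Pi Pn1] k.
  by rewrite leq_eqVlt => /orP[/eqP -> // | /Pi].
have /choice[j Pj] : forall n, exists j, forall k, (k <= n)%N -> P k j.
  by move=> n; exact: filter_ex (near_all n).
have [|l ujl] := hY (u \o j).
  move=> e e0; have [N _ Ne] := near_infty_natSinv_lt (PosNum e0).
  exists N => m n Nm Nn; apply: lt_trans (Ne N (leqnn N)).
  by apply: smallP; [exact: Pj | exact: Pj].
exists l; apply/cvgrPdist_lt => e e0; have e2 : 0 < e / 2 by lra.
have [N _ Ne] := near_infty_natSinv_lt (PosNum e2).
have [M _ Ml] := cvgr_dist_lt ujl e2.
apply: filterS (GP N) => i Pi; rewrite [e]splitr.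
apply: (mdist_lt_trans (Ml (maxn M N) (leq_maxl _ _))).
apply: lt_trans (Ne N (leqnn N)); apply: smallP Pi.
exact: Pj (leq_maxr _ _).
Qed.

Section uniform_convergence.
Context {J T : Type} (G : set_system J) (u : J -> T -> Y).

Definition uniformly_cauchy_on (K : set T) := forall e : R, 0 < e ->
  exists2 P, G P & forall i j, P i -> P j -> forall x, K x -> mdist (u i x) (u j x) < e.

Definition uniformly_cvg_on (g : T -> Y) (K : set T) := forall e : R, 0 < e ->
  \forall i \near G, forall x, K x -> mdist (g x) (u i x) < e.

Lemma uniformly_cvg_cauchy_on (g : T -> Y) (K : set T) :
  uniformly_cvg_on g K -> uniformly_cauchy_on K.
Proof.
move=> ugK e e0; have e2 : 0 < e / 2 by lra.
exists [set i | forall x, K x -> mdist (g x) (u i x) < e / 2]; first exact: ugK.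
move=> i j /= gi gj x Kx; rewrite [e]splitr.
by apply: mdist_lt_trans (gj x Kx); rewrite metric_sym; exact: gi.
Qed.

Lemma uniformly_cauchy_cvg_on (g : T -> Y) (K : set T) : ProperFilter G ->
  (forall x, K x -> u^~ x @ G --> g x) ->
  uniformly_cauchy_on K -> uniformly_cvg_on g K.
Proof.
move=> PG ug cauchy e e0; have e2 : 0 < e / 2 by lra.
have [P GP Pe] := cauchy _ e2; near=> i => x Kx.
have [j [Pj gj]] := filter_ex (filterI GP (cvgr_dist_lt (ug x Kx) e2)).
rewrite [e]splitr; apply: mdist_lt_trans gj (Pe j i Pj _ x Kx).
by near: i.
Unshelve. all: by end_near. Qed.

End uniform_convergence.

Section compact_open_convergence.
Context {J : Type} {T : topologicalType} (G : set_system J) (u : J -> T -> Y).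
Context (g : T -> Y).

Lemma uniformly_cvg_continuous_at (K : set T) (x : T) : ProperFilter G ->
  nbhs x K -> uniformly_cvg_on G u g K ->
  (\forall i \near G, {for x, continuous (u i)}) -> {for x, continuous g}.
Proof.
move=> PG Kx ugK ucont; apply/cvgrPdist_lt => e e0; have e3 : 0 < e / 3 by lra.
have [i [ugi uix]] := filter_ex (filterI (ugK _ e3) ucont).
apply: filterS (filterI Kx (continuous_at_mdist_lt uix e3)) => z [Kz /= iz].
have gi := ugi x (nbhs_singleton Kx); have := ugi z Kz; rewrite metric_sym => ig.
have := mdist_lt_trans (mdist_lt_trans gi iz) ig; lra.
Qed.

Lemma uniformly_cvg_image_subset (K : set T) (V : set Y) : Filter G ->
  compact K -> (forall x, K x -> {for x, continuous g}) ->
  uniformly_cvg_on G u g K -> open V -> g @` K `<=` V ->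
  \forall i \near G, u i @` K `<=` V.
Proof.
move=> FG cK gK ugK oV gKV.
suff : \forall i \near G, K `<=` [set x | V (u i x)].
  by apply: filterS => i KV _ [x Kx <-]; exact: KV.
move/compact_near_coveringP/near_covering_withinP : cK; apply => x Kx.
have /nbhs_mdistP[r /= r0 rV] : nbhs (g x) V.
  by apply: open_nbhs_nbhs; split => //; apply: gKV; exists x.
have r2 : 0 < r / 2 by lra.
exists ([set z | mdist (g x) (g z) < r / 2],
        [set i | forall z, K z -> mdist (g z) (u i z) < r / 2]).
  by split=> /=; [exact: continuous_at_mdist_lt (gK x Kx) r2 | exact: ugK].
case=> z i /= [xz iK] Kz; apply: rV; rewrite /= [r]splitr.
exact: mdist_lt_trans xz (iK z Kz).
Qed.

Lemma image_subset_uniformly_cvg (K : set T) : Filter G -> compact K ->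
  (forall x, K x -> {for x, continuous g}) ->
  (forall (L : set T) (V : set Y), compact L -> L `<=` K -> open V ->
     g @` L `<=` V -> \forall i \near G, u i @` L `<=` V) ->
  uniformly_cvg_on G u g K.
Proof.
move=> FG cK gK uLV e e0; have e4 : 0 < e / 4 by lra.
suff : \forall i \near G, K `<=` [set x | mdist (g x) (u i x) < e] by [].
move/compact_near_coveringP/near_covering_withinP : (cK); apply => x Kx.
pose Lx := K `&` [set z | mdist (g x) (g z) <= e / 4].
pose Vx := [set y | mdist (g x) y < e / 2].
have gLV : g @` Lx `<=` Vx by move=> _ [z [_ /= xz] <-]; rewrite /Vx /=; lra.
exists ([set z | mdist (g x) (g z) < e / 4], [set i | u i @` Lx `<=` Vx]).
  split; first exact: continuous_at_mdist_lt (gK x Kx) e4.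
  apply: uLV gLV; [exact: compact_setI_mdist_le | exact: subIsetl |].
  exact: open_mdist_lt.
case=> z i /= [xz iLV] Kz.
have xiz : mdist (g x) (u i z) < e / 2.
  by apply: iLV; exists z => //; split => //; exact: ltW.
rewrite metric_sym in xz; have := mdist_lt_trans xz xiz; lra.
Qed.

End compact_open_convergence.

End metric_valued_nets.

Lemma net_conv_near (I : Type) (le : I -> I -> Prop) (T : Type)
    (S : set (set T)) (x : I -> T) (l : T) (U : set T) :
  net_conv le S x l -> gen_open S U -> U l -> \forall i \near tail_filter le, U (x i).
Proof. by move=> xl /xl. Qed.

Lemma cod_continuous (X Y : topologicalType) (f : Cod X Y) (x : X) :
  cdom f x -> {for x, continuous (cfun f)}.
Proof.
move=> fx; have := @cfun_cont _ _ f.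
rewrite continuous_open_subspace; last exact: cdom_open.
by apply; rewrite inE.
Qed.

Lemma tauD_open_compact (X Y : topologicalType) (K : set X) (V : set Y) :
  compact K -> open V ->
  gen_open (@tauD_subbase X Y) [set h | K `<=` cdom h /\ cfun h @` K `<=` V].
Proof. by move=> cK oV; apply: gen_open_sub; left; exists K, V. Qed.

Lemma tauD_open_fell {X Y : topologicalType} (W : set (set X)) :
  fell_open W -> gen_open (@tauD_subbase X Y) [set h | W (Dc h)].
Proof. by move=> fW; apply: gen_open_sub; right; exists W. Qed.

Section gamma_cauchy_nets.
Context {R : realType} {X : topologicalType} {Y : metricType R}.
Context {I : Type} (le : I -> I -> Prop) (hI : directed le) (F : I -> Cod X Y).

Local Notation tails := (tail_filter le).
#[local] Instance tails_proper : ProperFilter tails := tail_filter_proper hI.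

Lemma gamma_cauchyP : gamma_cauchy le F <-> exists A : set X,
  [/\ closed A, net_conv le (@fell_subbase X) (fun i => Dc (F i)) A &
      forall K, compact K -> K `<=` ~` A ->
        (\forall i \near tails, K `<=` cdom (F i)) /\
        uniformly_cauchy_on tails (fun i => cfun (F i)) K].
Proof.
have [_ _ le_tr le_dir] := hI.
split=> -[A [cA DA AK]]; exists A; split=> //;
  [move=> K cK KA | move=> AT K cK _ KA].
  have [K0|K0] := pselect (K !=set0); last first.
    have nK x : ~ K x by move=> Kx; apply: K0; exists x.
    split=> [|e _]; first by apply: nearW => i x /nK.
    by exists setT => [|i j _ _ x /nK]; first exact: filterT.
  have AT : A <> setT by case: K0 => x /KA nAx AT; apply: nAx; rewrite AT.
  have [iK [Kdom cauchy]] := AK AT K cK K0 KA.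
  split=> [|e /cauchy[i0 [iKi0 small]]]; first by exists iK.
  exists [set i | le i0 i]; first by exists i0.
  by move=> i j i0i i0j; apply: small => //; exact: le_tr iKi0 _.
have [[iK Kdom] cauchy] := AK K cK KA; exists iK.
split=> // e /cauchy[P [i1 Pi1] small].
have [i0 [iKi0 i1i0]] := le_dir iK i1; exists i0; split=> // i j _ _ i0i i0j.
by apply: small; apply: Pi1; exact: le_tr i1i0 _.
Qed.

Lemma tauD_cvg_uniformly (f : Cod X Y) (K : set X) :
  net_conv le (@tauD_subbase X Y) F f -> compact K -> K `<=` cdom f ->
  (\forall i \near tails, K `<=` cdom (F i)) /\
  uniformly_cvg_on tails (fun i => cfun (F i)) (cfun f) K.
Proof.
move=> Ff cK Kf; split.
  have := net_conv_near Ff (tauD_open_compact cK openT) (conj Kf (subsetT _)).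
  by apply: filterS => i [].
apply: image_subset_uniformly_cvg cK _ _ => [x /Kf|L V cL LK oV fLV].
  exact: cod_continuous.
have := net_conv_near Ff (tauD_open_compact cL oV) (conj (subset_trans LK Kf) fLV).
by apply: filterS => i [].
Qed.

Lemma tauD_cvg_gamma_cauchy (f : Cod X Y) :
  net_conv le (@tauD_subbase X Y) F f -> gamma_cauchy le F.
Proof.
move=> Ff; apply/gamma_cauchyP; exists (Dc f); split.
- exact: open_closedC (cdom_open f).
- by move=> W fW; exact: Ff _ (tauD_open_fell fW).
- move=> K cK; rewrite /Dc setCK => Kf.
  have [Kdom ufK] := tauD_cvg_uniformly Ff cK Kf.
  by split => //; exact: uniformly_cvg_cauchy_on ufK.
Qed.

Lemma gamma_cauchy_limit (A : set X) : complete_metric Y ->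
  (forall K, compact K -> K `<=` ~` A ->
     uniformly_cauchy_on tails (fun i => cfun (F i)) K) ->
  exists g : X -> Y, forall K, compact K -> K `<=` ~` A ->
     uniformly_cvg_on tails (fun i => cfun (F i)) g K.
Proof.
move=> hY cauchy; have [[i0 _] _ _ _] := hI.
have /choice[g Fg] : forall x, exists y : Y,
    ~ A x -> (fun i => cfun (F i) x) @ tails --> y.
  move=> x; have [Ax|nAx] := pselect (A x); first by exists (cfun (F i0) x).
  have [|y Fxy] := @complete_cauchy_cvg _ _ _ tails (fun i => cfun (F i) x) hY _;
    last by exists y.
  have xA : [set x] `<=` ~` A by move=> _ ->.
  move=> e /(cauchy _ (@compact_set1 _ x) xA)[P GP small].
  by exists P => // i j Pi Pj; exact: small.
exists g => K cK KA; apply: uniformly_cauchy_cvg_on (cauchy K cK KA).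
by move=> x /KA; exact: Fg.
Qed.

Lemma uniform_limit_continuous_off (A : set X) (g : X -> Y) :
  locally_compact [set: X] -> hausdorff_space X -> closed A ->
  (forall K, compact K -> K `<=` ~` A -> \forall i \near tails, K `<=` cdom (F i)) ->
  (forall K, compact K -> K `<=` ~` A ->
     uniformly_cvg_on tails (fun i => cfun (F i)) g K) ->
  forall x, ~ A x -> {for x, continuous g}.
Proof.
move=> lcX hX cA Fdom ug x nAx.
have [K [cK Kx KA]] := locally_compact_nbhs_compact lcX hX
  (open_nbhs_nbhs (conj (closed_openC cA) nAx)).
have Fx : \forall i \near tails, {for x, continuous (cfun (F i))}.
  apply: filterS (Fdom K cK KA) => i /(_ x (nbhs_singleton Kx)).
  exact: cod_continuous.
exact: uniformly_cvg_continuous_at Kx (ug K cK KA) Fx.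
Qed.

Lemma gamma_cauchy_tauD_cvg : locally_compact [set: X] -> hausdorff_space X ->
  complete_metric Y -> gamma_cauchy le F ->
  exists f : Cod X Y, net_conv le (@tauD_subbase X Y) F f.
Proof.
move=> lcX hX hY /gamma_cauchyP[A [cA DA AK]].
have Fdom K : compact K -> K `<=` ~` A -> \forall i \near tails, K `<=` cdom (F i).
  by move=> cK /(AK K cK)[].
have [g ug] := gamma_cauchy_limit hY (fun K cK KA => (AK K cK KA).2).
have gc := uniform_limit_continuous_off lcX hX cA Fdom ug.
have gA : {within ~` A, continuous g}.
  by apply: continuous_in_subspaceT => x; rewrite inE; exact: gc.
exists (MkCod (closed_openC cA) gA); apply: (net_conv_subbase hI).
move=> _ [[K [V [cK oV ->]]]|[W [fW ->]]] /=; last first.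
  by rewrite /Dc /= setCK; exact: DA.
move=> [KA gKV]; apply: filterI (Fdom K cK KA) _.
apply: uniformly_cvg_image_subset cK _ (ug K cK KA) oV gKV => x /KA.
exact: gc.
Qed.

End gamma_cauchy_nets.

Theorem mainTheorem8 (R : realType) (X : topologicalType) (Y : metricType R)
    (hX_lc : locally_compact [set: X]) (hX_T2 : hausdorff_space X)
    (hX_2c : @second_countable X) (hY : complete_metric Y)
    (I : Type) (le : I -> I -> Prop) (hI : directed le) (F : I -> Cod X Y) :
  gamma_cauchy le F <->
  exists f : Cod X Y, net_conv le (@tauD_subbase X Y) F f.
Proof.
split; first exact: gamma_cauchy_tauD_cvg.
by case=> f; exact: tauD_cvg_gamma_cauchy.
Qed.
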